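(* Let $S\subseteq BS^{+}(1,3)$ be a finite set of size $k$ with coset decomposition $S=S_0\cup S_1\cup\cdots\cup S_t$, where $t\geq 2$. If $k_0=|S_0|\geq 2$ and $k_i=|S_i|=1$ for all $1\le i\le t$, then $|S^2|\geq \tfrac{7}{2}k-6$.
   Context: $BS(1,3)=\langle a,b\mid ab=ba^3\rangle$; $BS^{+}(1,3)=\{b^m a^x: m\in\mathbb{Z}_{\ge 0},\ x\in\mathbb{Z}\}$, with $(b^m a^x)(b^n a^y)=b^{m+n}a^{y+3^n x}$. $S^2=\{st: s,t\in S\}$. Coset decomposition: for a finite nonempty $S\subseteq BS^{+}(1,3)$, let $m_0<m_1<\cdots<m_t$ be the distinct integers $m\ge 0$ with $S\cap b^m a^{\mathbb Z}\neq\emptyset$; put $S_i=S\cap b^{m_i}a^{\mathbb Z}=b^{m_i}a^{A_i}$ with $A_i\subseteq\mathbb Z$ finite, and $k_i=|S_i|$. *)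

From HB Require Import structures.
From mathcomp Require Import all_boot all_order all_algebra.
From mathcomp Require Import finmap.
Set Implicit Arguments. Unset Strict Implicit. Unset Printing Implicit Defensive.
Import GRing.Theory Num.Theory.
Local Open Scope ring_scope.
Local Open Scope fset_scope.

(* Elements b^m a^x of BS^+(1,3) are represented by pairs (m, x) : nat * int. *)
Definition bsp := (nat * int)%type.

(* (b^m a^x)(b^n a^y) = b^(m+n) a^(y + 3^n x) *)
Definition bsmul (s t : bsp) : bsp :=
  ((fst s + fst t)%N, ((snd t : int) + (3 ^ fst t)%N%:Z * (snd s : int))%R).

Definition sqset (S : {fset bsp}) : {fset bsp} :=
  [fset bsmul s t | s in S, t in S].

Definition levels (S : {fset bsp}) : {fset nat} := [fset fst s | s in S].

Definition coset (S : {fset bsp}) (m : nat) : {fset bsp} :=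
  [fset s in S | fst s == m].

From HB Require Import structures.
From mathcomp Require Import all_boot all_order all_algebra.
From mathcomp Require Import finmap.
From mathcomp Require Import zify lra.
Import GRing.Theory Num.Theory Order.TTheory.
Local Open Scope ring_scope.
Local Open Scope fset_scope.

(* Group S^2 by levels.  Level 2 m0 contains S_0 S_0, of size at least 2 k0 - 1, since
   [hi S_0] and [S_0 lo] (hi, lo the extreme elements of S_0) meet only in [hi lo].
   For each of the t other levels m, level m0 + m contains [s S_0] (k0 elements) together
   with one of [hi s], [lo s]: right multiplication by s scales a-exponents by 3^m > 1, so
   they cannot both fit in the width of S_0.  With M the top level, the t levels M + m lie
   above all of these and are nonempty.  Hence |S^2| >= 2 k0 - 1 + (k0 + 1) t + t, and
   (2 k0 - 3)(2 t - 3) >= -11 gives the bound. *)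

Lemma seq_argmax (T : eqType) (f : T -> int) (s : seq T) : s != [::] ->
  exists2 x, x \in s & forall y, y \in s -> f y <= f x.
Proof.
case: s => [//|a s] _; elim: s a => [|b s IH] a.
  by exists a => [|y]; rewrite ?inE // => /eqP->.
have [ab|ba] := lerP (f a) (f b).
- have [x xs hx] := IH b; exists x => [|y]; first by rewrite inE xs orbT.
  rewrite inE => /orP[/eqP->|]; [exact: le_trans (hx _ (mem_head _ _))|exact: hx].
- have [x xs hx] := IH a; exists x => [|y].
    by move: xs; rewrite !inE => /orP[->|->]; rewrite ?orbT.
  rewrite !inE => /or3P[/eqP->|/eqP->|ys]; first exact: hx (mem_head _ _).
    exact: le_trans (ltW ba) (hx _ (mem_head _ _)).
  by apply: hx; rewrite inE ys orbT.
Qed.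

Lemma leq_sum_const (r : seq nat) (F : nat -> nat) c :
  (forall m, m \in r -> c <= F m)%N -> (c * size r <= \sum_(m <- r) F m)%N.
Proof.
move=> h; rewrite -iter_addn_0 -count_predT -big_const_seq big_seq [leqRHS]big_seq.
exact: leq_sum.
Qed.

Lemma cosetP S m p : reflect (p \in S /\ p.1 = m) (p \in coset S m).
Proof. by rewrite !inE; apply: (iffP andP) => -[pS /eqP]. Qed.

Lemma mem_coset_sqset S s t : s \in S -> t \in S ->
  bsmul s t \in coset (sqset S) (s.1 + t.1).
Proof. by move=> sS tS; apply/cosetP; split=> //; apply: in_imfset2. Qed.

Lemma bsmul_injr : right_injective bsmul.
Proof. by move=> [a x] [m y] [n z] /= [/addnI -> /addIr ->]. Qed.

Lemma bsmul_injl : left_injective bsmul.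
Proof.
move=> [n z] [a x] [m y] /= [/addIn -> e]; congr pair.
by apply: (mulfI (_ : (3 ^ n)%N%:Z != 0)); [rewrite eqz_nat expn_eq0 | apply: addrI e].
Qed.

Lemma card_fset_levels (T : {fset bsp}) (r : seq nat) : uniq r ->
  #|` [fset p in T | p.1 \in r]| = (\sum_(l <- r) #|` coset T l|)%N.
Proof.
elim: r => [|l r IH].
  move=> _; rewrite big_nil; apply/eqP; rewrite cardfs_eq0 -fsubset0.
  by apply/fsubsetP => p; rewrite !inE andbF.
rewrite cons_uniq => /andP[lr ur]; rewrite big_cons -IH //.
have -> : [fset p in T | p.1 \in l :: r] = coset T l `|` [fset p in T | p.1 \in r].
  by apply/fsetP=> p; rewrite !inE; case: (p \in T).
rewrite -cardfsUI.
have -> : coset T l `&` [fset p in T | p.1 \in r] = fset0.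
  apply/eqP; rewrite -fsubset0; apply/fsubsetP => p.
  rewrite !inE => /andP[/andP[_ /eqP pl] /andP[_ pr]].
  by move: lr; rewrite -pl pr.
by rewrite cardfs0 addn0.
Qed.

Lemma card_sum_coset (S : {fset bsp}) : #|` S| = (\sum_(l <- levels S) #|` coset S l|)%N.
Proof.
rewrite -card_fset_levels ?fset_uniq //.
have -> // : [fset p in S | p.1 \in levels S] = S.
by apply/fsetP => p; rewrite !inE andb_idr // => pS; apply/imfsetP; exists p.
Qed.

Lemma sum_coset_le (T : {fset bsp}) {r : seq nat} : uniq r ->
  (\sum_(l <- r) #|` coset T l| <= #|` T|)%N.
Proof.
move=> ur; rewrite -card_fset_levels //.
by apply/fsubset_leq_card/fsubsetP => p; rewrite !inE => /andP[].
Qed.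

Lemma card_levels_thin {S : {fset bsp}} {m0 : nat} : m0 \in levels S ->
  (forall m, m \in levels S -> m <> m0 -> #|` coset S m| = 1%N) ->
  #|` S| = (#|` coset S m0| + #|` levels S `\ m0|)%N.
Proof.
move=> m0L thin; rewrite card_sum_coset (big_fsetD1 _ m0L) /=; congr addn.
rewrite -sum1_size big_seq [RHS]big_seq; apply: eq_bigr => m /fsetD1P[mm0 mL].
by apply: thin => //; apply/eqP.
Qed.

Lemma coset_card_le1 {S : {fset bsp}} {m : nat} {lo : bsp} : lo \in coset S m ->
  (forall x, x \in coset S m -> x.2 = lo.2) -> (#|` coset S m| <= 1)%N.
Proof.
move=> /cosetP[_ lo1] same; rewrite -(cardfs1 lo); apply/fsubset_leq_card/fsubsetP => x xA.
have /cosetP[_ x1] := xA; rewrite inE; apply/eqP/injective_projections; rewrite ?x1 ?lo1 //.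
exact: same.
Qed.

Lemma coset_extremes {S : {fset bsp}} {m : nat} : coset S m != fset0 ->
  exists lo hi, [/\ lo \in coset S m, hi \in coset S m &
    forall x, x \in coset S m -> lo.2 <= x.2 <= hi.2].
Proof.
rewrite -cardfs_gt0 => ne.
have {}ne : enum_fset (coset S m) != [::] by move: ne; case: (enum_fset _).
have [hi hiS hhi] := @seq_argmax _ (fun p : bsp => p.2) _ ne.
have [lo loS hlo] := @seq_argmax _ (fun p : bsp => - p.2) _ ne.
by exists lo, hi; split=> // x xS; rewrite hhi // -lerN2 hlo.
Qed.

(* [hi * S_n] and [S_m * lo] meet only in [hi * lo]: compare second coordinates. *)
Lemma card_coset_sqset {S : {fset bsp}} {m n : nat} : coset S m != fset0 -> coset S n != fset0 ->
  (#|` coset S m| + #|` coset S n| <= #|` coset (sqset S) (m + n)| + 1)%N.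
Proof.
move=> /coset_extremes[loA [hi [_ /cosetP[hiS hi1] bA]]].
move=> /coset_extremes[lo [hiB [/cosetP[loS lo1] _ bB]]].
set P := [fset bsmul hi t | t in coset S n].
set Q := [fset bsmul s lo | s in coset S m].
have cP : #|` P| = #|` coset S n| by rewrite card_imfset //; apply: bsmul_injr.
have cQ : #|` Q| = #|` coset S m| by rewrite card_imfset //; apply: bsmul_injl.
have sPQ : P `|` Q `<=` coset (sqset S) (m + n).
  apply/fsubsetP => p /fsetUP[] /imfsetP[u /cosetP[uS u1] ->] /=.
    by rewrite -hi1 -u1 mem_coset_sqset.
  by rewrite -lo1 -u1 mem_coset_sqset.
have iPQ : P `&` Q `<=` [fset bsmul hi lo].
  apply/fsubsetP => p /fsetIP[/imfsetP[t tB ->] /imfsetP[s sA]].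
  have /andP[lot _] := bB _ tB; have /andP[_ shi] := bA _ sA.
  move: tB sA => /cosetP[_ t1] /cosetP[_ _] [_ e].
  rewrite /= t1 lo1 in e.
  have t2 : t.2 = lo.2.
    have c0 : 0 <= (3 ^ n)%N%:Z by [].
    by move: e lot shi c0; move: (3 ^ n)%N%:Z (t.2) (lo.2) (s.2) (hi.2); nia.
  have -> : t = lo by apply: injective_projections; rewrite ?t1 ?lo1.
  by rewrite inE.
have := cardfsUI P Q; have := fsubset_leq_card sPQ; have := fsubset_leq_card iPQ.
rewrite cardfs1 cP cQ; lia.
Qed.

(* If [hi * s] and [lo * s] both lie in [s * S_m], subtracting the two equations would give
   [3^(s.1) (hi - lo) = u1 - u2 <= hi - lo] with [hi > lo]. *)
Lemma card_coset_sqset_shift S m s : (2 <= #|` coset S m|)%N -> s \in S -> (0 < s.1)%N ->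
  (#|` coset S m| + 1 <= #|` coset (sqset S) (m + s.1)|)%N.
Proof.
move=> k2 sS s1.
have ne : coset S m != fset0 by rewrite -cardfs_gt0; apply: leq_trans k2.
have [lo [hi [loA hiA b]]] := coset_extremes ne.
have lohi : lo.2 < hi.2.
  rewrite lt_neqAle (andP (b _ hiA)).1 andbT; apply: contraTneq k2 => e.
  rewrite -ltnNge ltnS; apply: (coset_card_le1 loA) => x /b.
  by rewrite -e => /andP[? ?]; apply/eqP; rewrite eq_le; apply/andP.
set Q := [fset bsmul s u | u in coset S m].
have cQ : #|` Q| = #|` coset S m| by rewrite card_imfset //; apply: bsmul_injr.
have sQ : Q `<=` coset (sqset S) (m + s.1).
  by apply/fsubsetP => p /imfsetP[u /cosetP[uS <-] ->]; rewrite addnC mem_coset_sqset.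
have inC x : x \in coset S m -> bsmul x s \in coset (sqset S) (m + s.1).
  by move=> /cosetP[xS <-]; rewrite mem_coset_sqset.
have [p pQ pC] : exists2 p, p \notin Q & p \in coset (sqset S) (m + s.1).
  have [hiQ|] := boolP (bsmul hi s \in Q); last by exists (bsmul hi s); rewrite ?inC.
  have [loQ|] := boolP (bsmul lo s \in Q); last by exists (bsmul lo s); rewrite ?inC.
  move: hiQ loQ => /imfsetP[u1 u1A [_ e1]] /imfsetP[u2 u2A [_ e2]].
  have /andP[lu1 u1h] := b _ u1A; have /andP[lu2 u2h] := b _ u2A.
  move: u1A u2A hiA loA => /cosetP[_ u11] /cosetP[_ u21] /cosetP[_ h1] /cosetP[_ l1].
  rewrite /= u11 in e1; rewrite /= u21 in e2.
  have c2 : 2 <= (3 ^ s.1)%N%:Z.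
    by rewrite lez_nat; case: (s.1) s1 => // k _; rewrite expnS; have := expn_gt0 3 k; lia.
  move: e1 e2 lu1 u1h lu2 u2h lohi c2.
  by move: (3 ^ s.1)%N%:Z (3 ^ m)%N%:Z (s.2) (hi.2) (lo.2) (u1.2) (u2.2); nia.
have : p |` Q `<=` coset (sqset S) (m + s.1) by rewrite fsubUset fsub1set pC sQ.
by move/fsubset_leq_card; rewrite cardfsU1 pQ cQ addnC.
Qed.

Section MinimalLevel.

Context {S : {fset bsp}} {m0 : nat}.
Hypothesis m0_min : forall m, m \in levels S -> (m0 <= m)%N.

Local Notation k0 := #|` coset S m0|.
Local Notation L1 := (levels S `\ m0).

Lemma level_gt_m0 {m : nat} : m \in L1 -> (m0 < m)%N.
Proof. by case/fsetD1P => mm0 mL; rewrite ltn_neqAle eq_sym mm0 m0_min. Qed.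

Lemma level_witness {m : nat} : m \in L1 -> exists2 s, s \in S & s.1 = m.
Proof. by case/fsetD1P => _ /imfsetP[s sS ->]; exists s. Qed.

Lemma card_sqset_ge : (2 <= k0)%N -> (0 < #|` L1|)%N ->
  (2 * k0 + (k0 + 2) * #|` L1| <= #|` sqset S| + 1)%N.
Proof.
move=> k02 L1gt0.
have [M ML1 Mmax] : exists2 M, M \in L1 & forall m, m \in L1 -> (m <= M)%N.
  have ne : enum_fset L1 != [::] by move: L1gt0; case: (enum_fset _).
  by have [M ? Mmax] := @seq_argmax _ Posz _ ne; exists M => // m /Mmax; rewrite lez_nat.
set r1 := [seq (m0 + m)%N | m <- L1]; set r2 := [seq (M + m)%N | m <- L1].
have ur : uniq ((m0 + m0)%N :: r1 ++ r2).
  have ltM := level_gt_m0 ML1.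
  rewrite cons_uniq mem_cat cat_uniq !map_inj_uniq ?fset_uniq //; try exact: addnI.
  rewrite andbT; apply/and3P; split=> //.
  - by apply/norP; split; apply/mapP => -[m /level_gt_m0]; lia.
  - by apply/hasPn => _ /mapP[m /level_gt_m0 mm0 ->]; apply/mapP => -[m' /Mmax]; lia.
have := sum_coset_le (sqset S) ur; rewrite big_cons big_cat !big_map /=.
have k0ne : coset S m0 != fset0 by rewrite -cardfs_gt0; apply: leq_trans k02.
have b0 := card_coset_sqset k0ne k0ne.
have b1 : ((k0 + 1) * #|` L1| <= \sum_(m <- L1) #|` coset (sqset S) (m0 + m)|)%N.
  apply: leq_sum_const => m mL1; have [s sS s1] := level_witness mL1.
  by rewrite -s1 card_coset_sqset_shift // s1 (leq_ltn_trans _ (level_gt_m0 mL1)).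
have b2 : (1 * #|` L1| <= \sum_(m <- L1) #|` coset (sqset S) (M + m)|)%N.
  apply: leq_sum_const => m /level_witness[s sS <-].
  have [sM sMS <-] := level_witness ML1.
  by rewrite cardfs_gt0; apply/fset0Pn; exists (bsmul sM s); apply: mem_coset_sqset.
move=> sumle.
have -> : (2 * k0 + (k0 + 2) * #|` L1| = k0 + k0 + ((k0 + 1) * #|` L1| + 1 * #|` L1|))%N by lia.
by apply: leq_trans (leq_add b0 (leq_add b1 b2)) _; rewrite addnAC leq_add2r.
Qed.

End MinimalLevel.

Theorem lemma2p2 (S : {fset bsp}) (m0 : nat) :
  m0 \in levels S ->
  (forall m, m \in levels S -> (m0 <= m)%N) ->
  (3 <= #|` levels S|)%N ->
  (2 <= #|` coset S m0|)%N ->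
  (forall m, m \in levels S -> m <> m0 -> #|` coset S m| = 1%N) ->
  (7%:R / 2%:R) * (#|` S|)%:R - 6%:R <= (#|` sqset S|)%:R :> rat.
Proof.
move=> m0L m0_min L3 k02 thin.
have t2 : (2 <= #|` levels S `\ m0|)%N by move: L3; rewrite (cardfsD1 m0) m0L.
have cS := card_levels_thin m0L thin.
have cS2 := card_sqset_ge m0_min k02 (ltnW t2).
have : (7 * #|` S| <= 2 * #|` sqset S| + 12)%N by rewrite cS; nia.
rewrite -(ler_nat rat) natrD !natrM => ?; lra.
Qed.
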